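(* Let $1\le p\le q$, $n=p+q$, and let $\mu=(a_1,\dots,a_p\mid b_1,\dots,b_q)\in\mathbb{Z}^n$ be $\Delta^+(\mathfrak{k},\mathfrak{t})$-dominant with $\mu-\beta$ also $\Delta^+(\mathfrak{k},\mathfrak{t})$-dominant, and suppose $\mu\in\Lambda_{f,g}$ for some $1\le f\le p$, $1\le g\le q$. Let $\tau=(k_1,\dots,k_p\mid r_1,\dots,r_q)\in\Omega_{p,q}$. (a) If $\mu$ is a $\partial R$-weight and $k_1>a_1$, then there exists $\tau'=(k'_1,\dots,k'_p\mid r'_1,\dots,r'_q)\in\Omega_{p,q}$ with $\{\mu-\tau\}\gg\{\mu-\tau'\}$ and $$(k'_1,\dots,k'_p)=(a_1,\underbrace{a_1-1,\dots,a_1-1}_{h-1},k_{h+1},\dots,k_p),$$ where $h$ is the largest index with $k_h\ge a_1$. (b) If $\mu$ is a $\partial L$-weight and $r_1>b_1$, then there exists $\tau'=(k'_1,\dots,k'_p\mid r'_1,\dots,r'_q)\in\Omega_{p,q}$ with $\{\mu-\tau\}\gg\{\mu-\tau'\}$ and $$(r'_1,\dots,r'_q)=(b_1,\underbrace{b_1-1,\dots,b_1-1}_{h-1},r_{h+1},\dots,r_q),$$ where $h$ is the largest index with $r_h\ge b_1$.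
   Context: $\Delta^+(\mathfrak{k},\mathfrak{t})$-dominant means $a_1\ge\cdots\ge a_p\ge0$ and $b_1\ge\cdots\ge b_q\ge0$; $\beta=(1,0,\dots,0\mid1,0,\dots,0)$. $\Lambda_{f,g}$ is the set of such $\mu$ with $\sum_{i=1}^f a_i+\sum_{j=1}^g b_j>2pq-2(p-f)(q-g)$. $\mu$ is a $\partial R$-weight if $q\ge a_1\ge1$, $2p\ge b_1\ge p+1$ and $a_1+b_1\le 2p+q-1$; a $\partial L$-weight if $2q\ge a_1\ge q+1$, $p\ge b_1\ge 1$ and $a_1+b_1\le p+2q-1$. $\Omega_{p,q}$ is the set of $(x\mid y)\in\mathbb{Z}^n$ with $q\ge x_1\ge\cdots\ge x_p\ge0$ and $y_j=\#\{i\mid q-x_i\ge j\}$ ($1\le j\le q$). For $\nu\in\mathbb{Z}^n$, $\{\nu\}$ is obtained by taking absolute values of all coordinates and sorting the first $p$ and the last $q$ coordinates separately in decreasing order. $u\gg v$ means $u_i\ge v_i$ for all $i$ with strict inequality for some $i$. *)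

From mathcomp Require Import all_boot all_order all_algebra.
Set Implicit Arguments. Unset Strict Implicit. Unset Printing Implicit Defensive.
Import Order.TTheory GRing.Theory Num.Theory.
Local Open Scope ring_scope.

(* Weights mu = (a_1..a_p | b_1..b_q) are given by two functions nat -> int,
   read 1-based: a i for 1 <= i <= p, b j for 1 <= j <= q. Values outside
   these ranges are irrelevant. *)

Definition dom_dec (m : nat) (x : nat -> int) : Prop :=
  (forall i : nat, (1 <= i)%N -> (i < m)%N -> x i.+1 <= x i) /\ 0 <= x m.

Definition kdominant (p q : nat) (a b : nat -> int) : Prop :=
  dom_dec p a /\ dom_dec q b.

(* subtract 1 from the first coordinate (mu - beta) *)
Definition sub_first (x : nat -> int) : nat -> int :=
  fun i => if i == 1%N then x i - 1 else x i.

Definition inLambda (p q f g : nat) (a b : nat -> int) : Prop :=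
  kdominant p q a b /\
  (\sum_(1 <= i < f.+1) a i + \sum_(1 <= j < g.+1) b j >
     2%:R * (p * q)%:R - 2%:R * ((p - f) * (q - g))%:R).

Definition dR_weight (p q : nat) (a b : nat -> int) : Prop :=
  [/\ a 1%N <= q%:R, 1 <= a 1%N, b 1%N <= (2 * p)%:R, (p.+1)%:R <= b 1%N
    & a 1%N + b 1%N <= (2 * p + q)%:R - 1].

Definition dL_weight (p q : nat) (a b : nat -> int) : Prop :=
  [/\ a 1%N <= (2 * q)%:R, (q.+1)%:R <= a 1%N, b 1%N <= p%:R, 1 <= b 1%N
    & a 1%N + b 1%N <= (p + 2 * q)%:R - 1].

Definition inOmega (p q : nat) (x y : nat -> int) : Prop :=
  [/\ x 1%N <= q%:R, dom_dec p x &
     forall j : nat, (1 <= j)%N -> (j <= q)%N ->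
       y j = (count (fun i => j%:R <= q%:R - x i) (iota 1 p))%:R].

Definition brace (p q : nat) (x y : nat -> int) : seq nat :=
  sort geq [seq `|x i|%N | i <- iota 1 p] ++ sort geq [seq `|y j|%N | j <- iota 1 q].

Definition vsub (x y : nat -> int) : nat -> int := fun i => x i - y i.

Definition gg (u v : seq nat) : Prop :=
  size u = size v /\ all2 (fun s t => (t <= s)%N) u v /\ has (fun st => (st.2 < st.1)%N) (zip u v).

Definition lastidx (m : nat) (P : nat -> bool) : nat :=
  (\max_(1 <= i < m.+1 | P i) i)%N.

(** If k_1 > a_1, lower k_1 to a_1 and k_2, ..., k_h to a_1 - 1, and let r' be
    determined by the definition of Omega_{p,q}.  On the first block every
    distance |a_i - k_i| weakly decreases (a_i < a_1 for i >= 2 because mu - beta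
    is dominant) and the first one strictly.  On the second block r' >= r; the
    two differ only at indices j with a_1 + j <= q + 1, where the Lambda_{f,g}
    inequality forces b_j >= p >= r'_j, so |b_j - r'_j| <= |b_j - r_j| too.
    Coordinatewise domination of absolute values survives sorting, which gives
    {mu - tau} >> {mu - tau'}.  Part (b) is part (a) with the roles of (p, a, k)
    and (q, b, r) exchanged: Omega_{p,q} is invariant under this exchange since r
    is the partition conjugate to q - k, and so is Lambda_{f,g}. *)

From mathcomp Require Import all_boot all_order all_algebra zify.
Import Order.TTheory GRing.Theory Num.Theory.
Local Open Scope ring_scope.
Set Implicit Arguments. Unset Strict Implicit.

Section Domination.

Implicit Types (s u v : seq nat) (G H : nat -> nat).

Lemma sorted_geq_nth_count u i x : sorted geq u -> (i < size u)%N ->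
  (x <= nth 0 u i)%N = (i < count (leq x) u)%N.
Proof.
elim: u i => [//|y u IHu] i /= sorted_yu lt_i_u.
have sorted_u := path_sorted sorted_yu.
case: (leqP x y) => [le_xy|lt_yx] /=.
  by case: i lt_i_u => //= i lt_i_u; rewrite add1n ltnS IHu.
have small_u : all (fun z => z < x)%N u.
  apply/allP=> z z_u; apply: leq_ltn_trans lt_yx.
  by move: sorted_yu; rewrite (path_sortedE (rev_trans leq_trans)) => /andP[/allP ->].
rewrite add0n; have -> : count (leq x) u = 0%N.
  apply/eqP; rewrite -leqn0 leqNgt -has_count.
  by apply/hasPn=> z /(allP small_u); rewrite /= -ltnNge.
case: i lt_i_u => [|i] /= lt_i_u; first by rewrite leqNgt lt_yx.
by rewrite leqNgt (allP small_u) // mem_nth.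
Qed.

Lemma count_all2_geq u v (P : pred nat) : {homo P : x y / (x <= y)%N >-> x ==> y} ->
  all2 geq u v -> (count P v <= count P u)%N.
Proof.
move=> P_up; elim: u v => [|x u IHu] [|y v] //= /andP[le_yx uv].
by rewrite leq_add ?IHu //; case: (P y) (P_up _ _ le_yx) => //= ->.
Qed.

Lemma all2_geq_sort u v : size u = size v -> all2 geq u v -> all2 geq (sort geq u) (sort geq v).
Proof.
move=> size_uv uv; have geq_total : total geq by move=> x y; apply: leq_total.
rewrite all2E !size_sort size_uv eqxx /=.
apply/(all_nthP (0, 0)%N) => i; rewrite size_zip !size_sort size_uv minnn => lt_i_v.
rewrite nth_zip ?size_sort //= sorted_geq_nth_count ?sort_sorted ?size_sort ?size_uv //.
have := leqnn (nth 0 (sort geq v) i).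
rewrite sorted_geq_nth_count ?size_sort ?sort_sorted //.
move=> /leq_trans; apply; rewrite !(permP (permEl (perm_sort geq _))).
by apply: count_all2_geq uv => x y le_xy; apply/implyP=> /leq_trans; apply.
Qed.

Lemma all2_cat (r : rel nat) s1 s2 t1 t2 : size s1 = size t1 ->
  all2 r (s1 ++ s2) (t1 ++ t2) = all2 r s1 t1 && all2 r s2 t2.
Proof. by elim: s1 t1 => [|x s1 IHs] [|y t1] //= [/IHs ->]; rewrite andbA. Qed.

Lemma has_ltn_zip u v : all2 geq u v -> (sumn v < sumn u)%N ->
  has (fun xy => xy.2 < xy.1)%N (zip u v).
Proof.
elim: u v => [|x u IHu] [|y v] //= /andP[le_yx uv].
case: (ltnP y x) => //= le_xy; have -> : y = x by apply/anti_leq; rewrite le_yx le_xy.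
by rewrite ltn_add2l; apply: IHu.
Qed.

Lemma sumn_all2_geq u v : all2 geq u v -> (sumn v <= sumn u)%N.
Proof. by elim: u v => [|x u IHu] [|y v] //= /andP[le_yx /IHu]; apply: leq_add. Qed.

Lemma all2_geq_map s G H : {in s, forall i, H i <= G i}%N -> all2 geq (map G s) (map H s).
Proof.
elim: s => //= i s IHs le_G; rewrite le_G ?mem_head ?IHs // => j s_j.
by rewrite le_G ?inE ?s_j ?orbT.
Qed.

Lemma sumn_map_ltn s G H : {in s, forall i, H i <= G i}%N ->
  (exists2 i, i \in s & H i < G i)%N -> (sumn (map H s) < sumn (map G s))%N.
Proof.
elim: s => [_ [//]|j s IHs] le_G [i]; rewrite inE => /orP[/eqP-> lt_G|s_i lt_G] /=.
  by rewrite -addSn leq_add ?sumn_all2_geq ?all2_geq_map // => k s_k; rewrite le_G ?inE ?s_k ?orbT.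
rewrite -addnS leq_add ?le_G ?mem_head ?IHs //; last by exists i.
by move=> k s_k; rewrite le_G ?inE ?s_k ?orbT.
Qed.

End Domination.

Lemma gg_sort_cat u1 u2 v1 v2 : size u1 = size v1 -> size u2 = size v2 ->
  all2 geq u1 v1 -> all2 geq u2 v2 -> (sumn v1 + sumn v2 < sumn u1 + sumn u2)%N ->
  gg (sort geq u1 ++ sort geq u2) (sort geq v1 ++ sort geq v2).
Proof.
move=> size1 size2 uv1 uv2 lt_sum.
have uv : all2 geq (sort geq u1 ++ sort geq u2) (sort geq v1 ++ sort geq v2).
  by rewrite all2_cat ?size_sort // !all2_geq_sort.
split; first by rewrite !size_cat !size_sort size1 size2.
split=> //; apply: has_ltn_zip uv _.
by rewrite !sumn_cat !(perm_sumn (permEl (perm_sort geq _))).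
Qed.

Lemma brace_gg p q (x y x' y' : nat -> int) :
  {in iota 1 p, forall i, `|x' i| <= `|x i|}%N ->
  {in iota 1 q, forall j, `|y' j| <= `|y j|}%N ->
  (exists2 i, i \in iota 1 p & `|x' i| < `|x i|)%N \/
  (exists2 j, j \in iota 1 q & `|y' j| < `|y j|)%N ->
  gg (brace p q x y) (brace p q x' y').
Proof.
move=> le_x le_y lt_xy; apply: gg_sort_cat; rewrite ?size_map ?all2_geq_map //.
case: lt_xy => [lt_x|lt_y].
  by rewrite -addSn leq_add ?sumn_map_ltn ?sumn_all2_geq ?all2_geq_map.
by rewrite -addnS leq_add ?sumn_map_ltn ?sumn_all2_geq ?all2_geq_map.
Qed.

Lemma dom_dec_mono m (x : nat -> int) i j : dom_dec m x ->
  (1 <= i <= j)%N -> (j <= m)%N -> x j <= x i.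
Proof.
move=> [x_dec _] /andP[i_ge1]; elim: j => [|j IHj]; first by rewrite leqn0 => /eqP->.
rewrite leq_eqVlt => /orP[/eqP<- // | le_ij] lt_jm.
by apply: le_trans (IHj le_ij (ltnW lt_jm)); apply: x_dec; rewrite ?(leq_trans i_ge1).
Qed.

Lemma dom_dec_ge0 m (x : nat -> int) i : dom_dec m x -> (1 <= i <= m)%N -> 0 <= x i.
Proof.
move=> x_dom /andP[i_ge1 le_im]; case: (x_dom) => _ /le_trans; apply.
by apply: dom_dec_mono x_dom _ (leqnn m); rewrite i_ge1.
Qed.

Lemma sub_first_dom_lt m (x : nat -> int) i : dom_dec m (sub_first x) ->
  (2 <= i <= m)%N -> x i < x 1%N.
Proof.
case: i => [|[|i]] // x_dom /andP[_ lt_im].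
have := dom_dec_mono x_dom (isT : 1 <= 1 <= i.+2)%N lt_im.
by rewrite /sub_first /= lerBrDr => /lt_le_trans; apply; rewrite ltrDl.
Qed.

Lemma lastidx_downE m (P : pred nat) i :
  (forall i j, (1 <= i <= j)%N -> (j <= m)%N -> P j -> P i) ->
  (1 <= i <= m)%N -> P i = (i <= lastidx m P)%N.
Proof.
move=> P_down /andP[i_ge1 le_im]; apply/idP/idP => [Pi | le_i_last].
  by apply: (@leq_bigmax_seq _ _ _ (fun i => i)); rewrite // mem_index_iota i_ge1 ltnS.
apply/negPn/negP => notPi.
suff : (lastidx m P <= i.-1)%N by rewrite -ltnS prednK // ltnNge le_i_last.
apply/bigmax_leqP_seq => j; rewrite mem_index_iota ltnS => /andP[j_ge1 le_jm] Pj.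
rewrite -ltnS prednK // ltnNge; apply: contra notPi => le_ij.
by apply: P_down Pj; rewrite ?i_ge1.
Qed.

Lemma dom_dec_lastidxE p (x : nat -> int) (c : int) i : dom_dec p x -> (1 <= i <= p)%N ->
  (c <= x i) = (i <= lastidx p (fun i => (c <= x i)%R))%N.
Proof.
move=> x_dom; apply: lastidx_downE => i1 i2 le_i12 le_i2p /le_trans; apply.
exact: dom_dec_mono x_dom le_i12 le_i2p.
Qed.

Lemma count_iota_tail p n : (n <= p)%N -> count (fun i => p < i + n)%N (iota 1 p) = n.
Proof.
move=> le_np; have -> : iota 1 p = iota 1 (p - n) ++ iota (p - n).+1 n.
  by rewrite -{1}(subnK le_np) iotaD add1n.
rewrite count_cat (@eq_in_count _ _ pred0) ?count_pred0 => [|i]; last by rewrite mem_iota /=; lia.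
by rewrite (@eq_in_count _ _ predT) ?count_predT ?size_iota // => i; rewrite mem_iota /=; lia.
Qed.

Lemma count_iota_upE p (P : pred nat) i :
  (forall i j, (1 <= i <= j)%N -> (j <= p)%N -> P i -> P j) ->
  (1 <= i <= p)%N -> P i = (p < i + count P (iota 1 p))%N.
Proof.
move=> P_up /andP[i_ge1 le_ip].
have -> : iota 1 p = iota 1 i ++ iota i.+1 (p - i) by rewrite -{1}(subnKC le_ip) iotaD add1n.
rewrite count_cat; case Pi: (P i).
  have -> : count P (iota i.+1 (p - i)) = (p - i)%N.
    rewrite (@eq_in_count _ _ predT) ?count_predT ?size_iota // => j.
    rewrite mem_iota => /andP[lt_ij lt_jp] /=.
    by apply: (P_up i j) Pi; rewrite ?i_ge1 //; lia.
  have : (0 < count P (iota 1 i))%N.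
    by rewrite -has_count; apply/hasP; exists i; rewrite ?mem_iota ?i_ge1 /=.
  lia.
have -> : count P (iota 1 i) = 0%N.
  rewrite (@eq_in_count _ _ pred0) ?count_pred0 // => j; rewrite mem_iota => /andP[j_ge1 lt_ji].
  apply/contraFF: Pi => /= Pj.
  by apply: (P_up j i) Pj; rewrite ?j_ge1 //; lia.
have := count_size P (iota i.+1 (p - i)); rewrite size_iota; lia.
Qed.

Lemma sub_in_count (T : eqType) (s : seq T) (P Q : pred T) :
  {in s, subpred P Q} -> (count P s <= count Q s)%N.
Proof.
elim: s => //= x s IHs PQ; apply: leq_add.
  by case: (P x) (PQ x (mem_head x s)) => [/(_ isT)->|].
by apply: IHs => y s_y; apply: PQ; rewrite inE s_y orbT.
Qed.

Definition omega_conj (p q : nat) (x : nat -> int) : nat -> int :=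
  fun j => (count (fun i => j%:R <= q%:R - x i) (iota 1 p))%:R.

Lemma inOmega_swap p q (x y : nat -> int) : (0 < q)%N -> inOmega p q x y -> inOmega q p y x.
Proof.
move=> q_gt0 [x1_le x_dom y_def].
set N := fun j => count (fun i => j%:R <= q%:R - x i) (iota 1 p).
have y_N j : (1 <= j <= q)%N -> y j = (N j)%:R by case/andP; apply: y_def.
have N_up j i : (1 <= i <= p)%N -> (j%:R <= q%:R - x i) = (p < i + N j)%N.
  apply: count_iota_upE => i1 i2 le_i12 le_i2p; have := dom_dec_mono x_dom le_i12 le_i2p; lia.
split.
- by rewrite y_N ?q_gt0 // ler_nat -[p in (_ <= p)%N](size_iota 1 p) count_size.
- split=> [j j_ge1 lt_jq|]; last by rewrite y_N ?q_gt0 ?leqnn.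
  rewrite !y_N ?j_ge1 ?(ltnW lt_jq) // ler_nat; apply: sub_count => i /=; lia.
move=> i i_ge1 le_ip; have i_p : (1 <= i <= p)%N by rewrite i_ge1.
have x_ge0 := dom_dec_ge0 x_dom i_p.
have x_le : x i <= q%:R by apply: le_trans x1_le; apply: dom_dec_mono x_dom _ le_ip.
suff -> : count (fun j => i%:R <= p%:R - y j) (iota 1 q) = `|x i|%N by lia.
rewrite -(@count_iota_tail q `|x i|%N); last by lia.
apply: eq_in_count => j; rewrite mem_iota add1n ltnS => j_q.
by rewrite y_N //; have := N_up j i i_p; lia.
Qed.

Lemma inLambda_swap p q f g (a b : nat -> int) : inLambda p q f g a b -> inLambda q p g f b a.
Proof.
case=> [[a_dom b_dom] sum_gt]; split; first by split.
by rewrite (mulnC q p) (mulnC (q - g)%N) [X in _ < X]addrC.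
Qed.

Lemma sum_nat_le_const (F : nat -> int) (c : int) m n :
  (forall i, (m <= i < n)%N -> F i <= c) -> \sum_(m <= i < n) F i <= c * (n - m)%:R.
Proof. by move=> le_Fc; rewrite mulr_natr -sumr_const_nat; apply: ler_sum_nat. Qed.

Lemma inLambda_b_ge p q f g (a b : nat -> int) j :
  inLambda p q f g a b -> (f <= p)%N -> (g <= q)%N -> b 1%N <= (2 * p)%:R ->
  (1 <= j <= q)%N -> a 1%N + j%:R <= q%:R + 1 -> p%:R <= b j.
Proof.
move=> [[a_dom b_dom] sum_gt] le_fp le_gq b1_le /andP[j_ge1 le_jq] a1_le.
rewrite leNgt; apply/negP => bj_lt.
have sum_a : \sum_(1 <= i < f.+1) a i <= a 1%N * (f.+1 - 1)%:R.
  by apply: sum_nat_le_const => i /andP[i_ge1 lt_if]; apply: dom_dec_mono a_dom _ _; lia.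
have b_le i : (1 <= i <= q)%N -> b i <= (2 * p)%:R.
  by move=> /andP[i_ge1 le_iq]; apply: le_trans b1_le; apply: dom_dec_mono b_dom _ le_iq.
have [lt_gj | le_jg] := ltnP g j.
  have sum_b : \sum_(1 <= i < g.+1) b i <= (2 * p)%:R * (g.+1 - 1)%:R.
    by apply: sum_nat_le_const => i /andP[i_ge1 lt_ig]; apply: b_le; lia.
  move: sum_gt sum_a sum_b; rewrite subn1 /=; nia.
rewrite [X in _ < _ + X](@big_cat_nat _ _ _ j) /= in sum_gt; [|lia|lia].
have sum_b1 : \sum_(1 <= i < j) b i <= (2 * p)%:R * (j - 1)%:R.
  by apply: sum_nat_le_const => i /andP[i_ge1 lt_ij]; apply: b_le; lia.
have sum_b2 : \sum_(j <= i < g.+1) b i <= (p%:R - 1) * (g.+1 - j)%:R.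
  apply: sum_nat_le_const => i /andP[le_ji lt_ig].
  have : b i <= b j by apply: dom_dec_mono b_dom _ _; [rewrite j_ge1 | lia].
  lia.
(* The Lambda threshold exceeds these bounds by
   (p + 1 - f)(g + 1 - j) + f(q - g) + f(q + 1 - j - a_1) >= 0. *)
move: sum_gt sum_a sum_b1 sum_b2; rewrite subn1 /= !natrM !natrB //; last lia.
move: (\sum_(1 <= i < f.+1) a i) (\sum_(1 <= i < j) b i) (\sum_(j <= i < g.+1) b i) => SA SB1 SB2.
nia.
Qed.

Definition lower_first (h : nat) (c : int) (k : nat -> int) : nat -> int :=
  fun i => if i == 1%N then c else if (i <= h)%N then c - 1 else k i.

Section LowerFirst.

Variables (p q : nat) (a k : nat -> int).

Let h := lastidx p (fun i => a 1%N <= k i).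
Let k' := lower_first h (a 1%N) k.

Lemma lower_first_le i : dom_dec p k -> a 1%N < k 1%N -> (1 <= i <= p)%N -> k' i <= k i.
Proof.
move=> k_dom a1_lt i_p; have := dom_dec_lastidxE (a 1%N) k_dom i_p.
rewrite /k' /lower_first; case: (i =P 1%N) => [->|_]; first lia.
by case: ifP => ?; lia.
Qed.

Lemma lower_first_dom : (0 < p)%N -> 1 <= a 1%N -> dom_dec p k -> dom_dec p k'.
Proof.
move=> p_gt0 a1_ge1 k_dom; have h_spec := dom_dec_lastidxE (a 1%N) k_dom.
split=> [i i_ge1 lt_ip | ].
  have hi : (a 1%N <= k i) = (i <= h)%N by apply: h_spec; rewrite i_ge1 ltnW.
  have hi1 : (a 1%N <= k i.+1) = (i.+1 <= h)%N by apply: h_spec.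
  have le_k : k i.+1 <= k i by case: k_dom => k_dec _; apply: k_dec.
  by rewrite /k' /lower_first; repeat case: ifP => ?; lia.
have hp : (a 1%N <= k p) = (p <= h)%N by apply: h_spec; rewrite p_gt0 leqnn.
have k_ge0 : 0 <= k p by apply: dom_dec_ge0 k_dom _; rewrite p_gt0 leqnn.
by rewrite /k' /lower_first; repeat case: ifP => ?; lia.
Qed.

Lemma lower_first_Omega : (0 < p)%N -> 1 <= a 1%N -> a 1%N <= q%:R -> dom_dec p k ->
  inOmega p q k' (omega_conj p q k').
Proof.
move=> p_gt0 a1_ge1 a1_le k_dom.
by split; [rewrite /k' /lower_first eqxx | apply: lower_first_dom |].
Qed.

Lemma lower_first_dist_a1 : a 1%N < k 1%N -> (`|vsub a k' 1| < `|vsub a k 1|)%N.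
Proof. by rewrite /vsub /k' /lower_first eqxx; lia. Qed.

Lemma lower_first_dist_a : dom_dec p a -> dom_dec p (sub_first a) -> dom_dec p k ->
  {in iota 1 p, forall i, `|vsub a k' i| <= `|vsub a k i|}%N.
Proof.
move=> a_dom a_dom1 k_dom i; rewrite mem_iota add1n ltnS => i_p.
have a_ge0 := dom_dec_ge0 a_dom i_p; have := dom_dec_lastidxE (a 1%N) k_dom i_p.
rewrite /vsub /k' /lower_first; case: (i =P 1%N) => [->|i_ne1]; first lia.
have a_lt : a i < a 1%N by apply: sub_first_dom_lt a_dom1 _; lia.
by case: ifP => ?; lia.
Qed.

Lemma lower_first_dist_b f g (b r : nat -> int) :
  inLambda p q f g a b -> (f <= p)%N -> (g <= q)%N -> b 1%N <= (2 * p)%:R ->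
  inOmega p q k r -> a 1%N < k 1%N ->
  {in iota 1 q, forall j, `|vsub b (omega_conj p q k') j| <= `|vsub b r j|}%N.
Proof.
move=> ab_Lambda le_fp le_gq b1_le [_ k_dom r_def] a1_lt j; rewrite mem_iota add1n ltnS => j_q.
rewrite /vsub /omega_conj r_def; [|lia|lia].
set N' := count _ _; set N := count _ _.
have le_NN' : (N <= N')%N.
  apply: sub_in_count => i; rewrite mem_iota add1n ltnS => i_p /=.
  by have := lower_first_le k_dom a1_lt i_p; lia.
have le_N'p : (N' <= p)%N by rewrite -[p in (_ <= p)%N](size_iota 1 p) count_size.
have [a1_small | a1_big] := boolP (a 1%N + j%:R <= q%:R + 1).
  by have := inLambda_b_ge ab_Lambda le_fp le_gq b1_le j_q a1_small; lia.
suff -> : N' = N by [].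
apply: eq_in_count => i; rewrite mem_iota add1n ltnS => i_p /=.
have := dom_dec_lastidxE (a 1%N) k_dom i_p; rewrite /k' /lower_first.
by case: (i =P 1%N) => [->|_]; [lia | case: ifP => ?; lia].
Qed.

End LowerFirst.

Unset Implicit Arguments.

Theorem lemma3p2 (p q : nat) (a b : nat -> int) (f g : nat) (k r : nat -> int) :
  (1 <= p)%N -> (p <= q)%N ->
  kdominant p q a b ->
  kdominant p q (sub_first a) (sub_first b) ->
  (1 <= f)%N -> (f <= p)%N -> (1 <= g)%N -> (g <= q)%N ->
  inLambda p q f g a b ->
  inOmega p q k r ->
  (dR_weight p q a b -> k 1%N > a 1%N ->
     let h := lastidx p (fun i => a 1%N <= k i) in
     exists k' r' : nat -> int,
       [/\ inOmega p q k' r',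
           gg (brace p q (vsub a k) (vsub b r)) (brace p q (vsub a k') (vsub b r')) &
           forall i : nat, (1 <= i)%N -> (i <= p)%N ->
             k' i = (if i == 1%N then a 1%N
                     else if (i <= h)%N then a 1%N - 1 else k i)]) /\
  (dL_weight p q a b -> r 1%N > b 1%N ->
     let h := lastidx q (fun j => b 1%N <= r j) in
     exists k' r' : nat -> int,
       [/\ inOmega p q k' r',
           gg (brace p q (vsub a k) (vsub b r)) (brace p q (vsub a k') (vsub b r')) &
           forall j : nat, (1 <= j)%N -> (j <= q)%N ->
             r' j = (if j == 1%N then b 1%N
                     else if (j <= h)%N then b 1%N - 1 else r j)]).
Proof.
move=> p_gt0 le_pq [a_dom b_dom] [a_dom1 b_dom1] _ le_fp _ le_gq ab_Lambda k_Omega.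
have q_gt0 : (0 < q)%N := leq_trans p_gt0 le_pq.
have r_Omega := inOmega_swap q_gt0 k_Omega.
have [[_ k_dom _] [_ r_dom _]] := (k_Omega, r_Omega).
have one_p : 1%N \in iota 1 p by rewrite mem_iota leqnn add1n ltnS.
have one_q : 1%N \in iota 1 q by rewrite mem_iota leqnn add1n ltnS.
split=> [[a1_le a1_ge1 b1_le _ _] a1_lt h | [a1_le _ b1_le b1_ge1 _] b1_lt h].
  exists (lower_first h (a 1%N) k), (omega_conj p q (lower_first h (a 1%N) k)).
  split; [exact: lower_first_Omega | | by []].
  apply: brace_gg; first exact: lower_first_dist_a a_dom a_dom1 k_dom.
    exact: lower_first_dist_b ab_Lambda le_fp le_gq b1_le k_Omega a1_lt.
  by left; exists 1%N; last exact: lower_first_dist_a1.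
exists (omega_conj q p (lower_first h (b 1%N) r)), (lower_first h (b 1%N) r).
split; [by apply: inOmega_swap; last exact: lower_first_Omega | | by []].
apply: brace_gg; last by right; exists 1%N; last exact: lower_first_dist_a1.
  exact: lower_first_dist_b (inLambda_swap ab_Lambda) le_gq le_fp a1_le r_Omega b1_lt.
exact: lower_first_dist_a b_dom b_dom1 r_dom.
Qed.
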